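(* Let $\mathcal{H}$ be a real Hilbert space, $\bar{K}\subseteq\mathcal{H}$ a nonempty closed set, $F:\mathcal{H}\times\mathcal{H}\to\mathbb{R}$ a bifunction, and $k,r>0$, $\lambda>0$ constants; put $\epsilon=\frac{k}{2r}$. Assume $F$ is pseudomonotone on $\bar{K}\times\bar{K}$ in the sense that for all $u,v\in\bar{K}$, $$F(u,v)+\frac{k}{2r}\|v-u\|^2\ge 0 \implies F(v,u)+\frac{k}{2r}\|v-u\|^2\le 0.$$ Let $u^*\in\bar{K}$ be a solution of the uniformly regular equilibrium problem, i.e. $F(u^*,v)+\frac{k}{2r}\|v-u^*\|^2\ge 0$ for all $v\in\bar{K}$. Let $u_n\in\mathcal{H}$ and let $u_{n+1}\in\bar{K}$ be generated by the proximal method, i.e. $$\lambda F(u_{n+1},v)+\Big\langle \big(1+\tfrac{k}{2r}\big)(u_{n+1}-u_n)+\tfrac{k}{2r}(v-u_{n+1}),\,v-u_{n+1}\Big\rangle\ge 0\quad\forall v\in\bar{K}.$$ Then $$\|u_{n+1}-u^*\|^2\le (1+\epsilon)^2\|u_n-u^*\|^2-\|u_{n+1}-(1+\epsilon)u_n+\epsilon u^*\|^2.$$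
   Context: $\bar{K}$ is intended to be a (possibly nonconvex) uniformly $r$-prox-regular set: for all $u\in\bar K$ and all nonzero proximal normals $w$ to $\bar K$ at $u$ with $\|w\|\le r$, $\langle w,v-u\rangle\le\frac{1}{2r}\|v-u\|^2$ for all $v\in\bar K$. *)

From HB Require Import structures.
From mathcomp Require Import all_boot all_order all_algebra.
From mathcomp Require Import all_classical all_reals all_analysis.
Set Implicit Arguments. Unset Strict Implicit. Unset Printing Implicit Defensive.
Import Order.TTheory GRing.Theory Num.Theory.
Import numFieldNormedType.Exports.
Local Open Scope classical_set_scope.
Local Open Scope ring_scope.

(* A real Hilbert space: a complete normed space over a realType R whose norm
   comes from an inner product [ip]. *)
Definition is_inner_product (R : realType) (H : completeNormedModType R)
    (ip : H -> H -> R) : Prop :=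
  [/\ (forall x y, ip x y = ip y x),
      (forall a x y z, ip (a *: x + y) z = a * ip x z + ip y z)
    & (forall x, `|x| ^+ 2 = ip x x)].

Definition proximal_normal (R : realType) (H : completeNormedModType R)
    (K : set H) (u w : H) : Prop :=
  K u /\ exists alpha : R, 0 < alpha /\
    forall v, K v -> `|(u + alpha *: w) - u| <= `|(u + alpha *: w) - v|.

Definition uniformly_prox_regular (R : realType) (H : completeNormedModType R)
    (ip : H -> H -> R) (K : set H) (r : R) : Prop :=
  forall u w, K u -> proximal_normal K u w -> w != 0 -> `|w| <= r ->
    forall v, K v -> ip w (v - u) <= (2 * r)^-1 * `|v - u| ^+ 2.

From HB Require Import structures.
From mathcomp Require Import all_boot all_order all_algebra.
From mathcomp Require Import all_classical all_reals all_analysis.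
From mathcomp Require Import ring lra.
Set Implicit Arguments. Unset Strict Implicit. Unset Printing Implicit Defensive.
Import Order.TTheory GRing.Theory Num.Theory.
Import numFieldNormedType.Exports.
Local Open Scope classical_set_scope.
Local Open Scope ring_scope.

(* With a := u_{n+1} - ustar and b := u_n - ustar, testing the proximal
   inequality at v = ustar and using F(u_{n+1}, ustar) <= 0 (pseudomonotonicity
   applied to the solution ustar) gives |a|^2 <= (1 + eps) <a, b>.  Expanding
   |a - (1 + eps) b|^2 turns this into the claimed estimate. *)

Section InnerProduct.
Variables (R : realType) (H : completeNormedModType R) (ip : H -> H -> R).
Hypothesis ip_inner : is_inner_product ip.

Lemma ip0l z : ip 0 z = 0.
Proof.
case: ip_inner => _ ipL _; have := ipL 1 0 0 z; rewrite scaler0 addr0 mul1r => ip0D.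
by apply/eqP; rewrite -(subrr (ip 0 z)) {2}ip0D addrK.
Qed.

Lemma ipDl x y z : ip (x + y) z = ip x z + ip y z.
Proof. by case: ip_inner => _ ipL _; rewrite -[x]scale1r ipL mul1r scale1r. Qed.

Lemma ipZl a x z : ip (a *: x) z = a * ip x z.
Proof. by case: ip_inner => _ ipL _; rewrite -[a *: x]addr0 ipL ip0l addr0. Qed.

Lemma ipNl x z : ip (- x) z = - ip x z.
Proof. by rewrite -scaleN1r ipZl mulN1r. Qed.

Lemma ipDr x y z : ip z (x + y) = ip z x + ip z y.
Proof. by case: ip_inner => ipC _ _; rewrite ipC ipDl (ipC x) (ipC y). Qed.

Lemma ipZr a x z : ip z (a *: x) = a * ip z x.
Proof. by case: ip_inner => ipC _ _; rewrite ipC ipZl ipC. Qed.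

Lemma ipNr x z : ip z (- x) = - ip z x.
Proof. by rewrite -scaleN1r ipZr mulN1r. Qed.

Lemma sqr_normB_scale a b c :
  `|a - c *: b| ^+ 2 = `|a| ^+ 2 - 2 * c * ip a b + c ^+ 2 * `|b| ^+ 2.
Proof.
case: ip_inner => ipC _ ipN.
rewrite !ipN !(ipDl, ipDr, ipNl, ipNr, ipZl, ipZr) (ipC b a).
ring.
Qed.

Lemma sqr_norm_le_sub_sqr_normB a b c :
  `|a| ^+ 2 <= c * ip a b -> `|a| ^+ 2 <= c ^+ 2 * `|b| ^+ 2 - `|a - c *: b| ^+ 2.
Proof. by rewrite sqr_normB_scale => ?; lra. Qed.

Lemma prox_step_ip_bound (u u' w : H) (e t : R) :
    t <= 0 ->
    0 <= t + ip ((1 + e) *: (u' - u) + e *: (w - u')) (w - u') ->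
  `|u' - w| ^+ 2 <= (1 + e) * ip (u' - w) (u - w).
Proof.
case: ip_inner => ipC _ ipN t_le0.
have -> : u' - u = (u' - w) - (u - w) by rewrite opprB addrA subrK.
have -> : w - u' = - (u' - w) by rewrite opprB.
move: (u' - w) (u - w) => a b.
rewrite ipN !(ipDl, ipDr, ipNl, ipNr, ipZl, ipZr) (ipC b a) => ?.
lra.
Qed.

End InnerProduct.

Theorem mainTheorem1 (R : realType) (H : completeNormedModType R)
    (ip : H -> H -> R) (Hip : is_inner_product ip)
    (K : set H) (K_ne : K !=set0) (K_closed : closed K)
    (F : H -> H -> R) (k r lambda : R)
    (k_gt0 : 0 < k) (r_gt0 : 0 < r) (lambda_gt0 : 0 < lambda)
    (K_proxreg : uniformly_prox_regular ip K r)
    (F_pseudo : forall u v, K u -> K v ->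
        0 <= F u v + k / (2 * r) * `|v - u| ^+ 2 ->
        F v u + k / (2 * r) * `|v - u| ^+ 2 <= 0)
    (ustar : H) (ustar_K : K ustar)
    (ustar_sol : forall v, K v -> 0 <= F ustar v + k / (2 * r) * `|v - ustar| ^+ 2)
    (un un1 : H) (un1_K : K un1)
    (prox : forall v, K v ->
        0 <= lambda * F un1 v
             + ip ((1 + k / (2 * r)) *: (un1 - un) + (k / (2 * r)) *: (v - un1))
                  (v - un1)) :
  let eps := k / (2 * r) in
  `|un1 - ustar| ^+ 2 <=
    (1 + eps) ^+ 2 * `|un - ustar| ^+ 2 - `|un1 - (1 + eps) *: un + eps *: ustar| ^+ 2.
Proof.
cbv zeta; set eps := k / (2 * r).
have eps_ge0 : 0 <= eps by rewrite divr_ge0 ?mulr_ge0 ?ltW.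
have F_le0 : lambda * F un1 ustar <= 0.
  have := F_pseudo _ _ ustar_K un1_K (ustar_sol _ un1_K).
  rewrite -/eps => F_le; apply: mulr_ge0_le0; first exact: ltW.
  by apply: le_trans F_le; rewrite lerDl mulr_ge0 ?exprn_ge0.
have -> : un1 - (1 + eps) *: un + eps *: ustar
          = (un1 - ustar) - (1 + eps) *: (un - ustar).
  rewrite scalerBr opprB [(1 + eps) *: ustar]scalerDl scale1r.
  by rewrite -!addrA addKr (addrC (eps *: ustar)).
apply: (sqr_norm_le_sub_sqr_normB Hip).
have := prox _ ustar_K; rewrite -/eps => prox_ustar.
have ip_bound := prox_step_ip_bound Hip F_le0 prox_ustar.
exact: ip_bound.
Qed.
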